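(* Let $H_n'$ be the specialization of $H_n$ at $u_{11}=qt_0$, $u_{12}=-qt_0^{-1}$, $u_{21}=u_0$, $u_{22}=-u_0^{-1}$, $u_{31}=u_n$, $u_{32}=-u_n^{-1}$, $u_{41}=t_n$, $u_{42}=-t_n^{-1}$ (an algebra over $\mathbb C[t_0^{\pm1},t_n^{\pm1},u_0^{\pm1},u_n^{\pm1},t^{\pm1},q^{\pm1}]$). Then there is an isomorphism $\phi:H_n'\to\mathcal H_n$ given by $$\phi(U_1)=qT_0,\ \phi(U_2)=T_0^\vee,\ \phi(U_3)=ST_n^\vee S^{-1},\ \phi(U_4)=ST_nS^{-1},\ \phi(T_i)=T_i\ (1\le i\le n-1),$$ where $S=T_1T_2\cdots T_{n-1}$.
   Context: $H_n$ for $D=\widetilde D_4$: $m=4$, $d_1=\dots=d_4=2$; it is the algebra over $\mathbb C[u^{\pm1},t^{\pm1}]$ ($u=(u_{kj})$, $k=1..4$, $j=1,2$) generated by invertible $U_1,\dots,U_4,T_1,\dots,T_{n-1}$ with relations $(U_1\cdots U_4)(T_1\cdots T_{n-2}T_{n-1}^2T_{n-2}\cdots T_1)=1$; $T_iT_{i+1}T_i=T_{i+1}T_iT_{i+1}$; $[T_i,T_j]=0$ for $|i-j|>1$; $[U_j,T_i]=0$ for $i\ge2$; $[U_j,T_1U_jT_1]=0$; $[U_k,T_1^{-1}U_jT_1]=0$ for $k<j$; $(U_k-u_{k1})(U_k-u_{k2})=0$; $T_i-T_i^{-1}=t-t^{-1}$. Sahi's algebra $\mathcal H_n$ is generated over $\mathbb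 C[t_0^{\pm1},t_n^{\pm1},u_0^{\pm1},u_n^{\pm1},t^{\pm1},q^{\pm1}]$ by $T_i^{\pm1}$ ($0\le i\le n$) and $X_i^{\pm1}$ ($1\le i\le n$) with relations: $T_0T_1T_0T_1=T_1T_0T_1T_0$; $X_iX_j=X_jX_i$; $T_{n-1}T_nT_{n-1}T_n=T_nT_{n-1}T_nT_{n-1}$; $T_iT_{i+1}T_i=T_{i+1}T_iT_{i+1}$ ($1\le i\le n-2$); $[T_i,T_j]=0$ for $|i-j|>1$; $T_i-T_i^{-1}=t-t^{-1}$ ($1\le i\le n-1$); $T_0-T_0^{-1}=t_0-t_0^{-1}$; $T_n-T_n^{-1}=t_n-t_n^{-1}$; $T_iX_j=X_jT_i$ if $|i-j|>1$ or if $i=n,j=n-1$; $T_iX_i=X_{i+1}T_i^{-1}$ ($1\le i\le n-1$); $T_n^\vee-(T_n^\vee)^{-1}=u_n-u_n^{-1}$ where $T_n^\vee=X_n^{-1}T_n^{-1}$; $T_0^\vee-(T_0^\vee)^{-1}=u_0-u_0^{-1}$ where $T_0^\vee=q^{-1}T_0^{-1}X_1$. *)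

From HB Require Import structures.
From mathcomp Require Import all_boot all_order all_algebra.
From mathcomp Require Import complex Rstruct.
Set Implicit Arguments. Unset Strict Implicit. Unset Printing Implicit Defensive.
Import Order.TTheory GRing.Theory Num.Theory.
Local Open Scope ring_scope.

Definition C : Type := complex Rdefinitions.R.
Definition C_fieldType : fieldType := C.

(** An algebra over
      K = C[t0^{+-1}, tn^{+-1}, u0^{+-1}, un^{+-1}, t^{+-1}, q^{+-1}]
    given by generators and relations is encoded as the C-algebra with the
    six parameters adjoined as central invertible generators.  Elements of the
    presented algebra are represented by (noncommutative) terms in the
    generators; a homomorphism between presented algebras is given by the
    images of generators; and an identity between terms holds in the presented
    algebra iff it holds in every (unital associative) C-algebra A under every
    assignment of the generators satisfying the defining relations.
    ------------------------------------------------------------------ *)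

Inductive term (G : Type) : Type :=
| Gen of G
| GenInv of G
| Cst of C_fieldType
| Add of term G & term G
| Opp of term G
| Mul of term G & term G.

Fixpoint eval (G : Type) (A : unitAlgType C_fieldType) (v : G -> A) (e : term G) : A :=
  match e with
  | Gen g => v g
  | GenInv g => (v g)^-1
  | Cst c => c%:A
  | Add a b => eval v a + eval v b
  | Opp a => - eval v a
  | Mul a b => eval v a * eval v b
  end.

Inductive Par : Type := Pt0 | Ptn | Pu0 | Pun | Pt | Pq.

(** Generators of H_n' : parameters, U_1..U_4 (HpU k = U_{k+1}),
    T_1..T_{n-1} (HpT j = T_{j+1}). *)
Inductive HpGen (n : nat) : Type :=
| HpP of Par
| HpU of 'I_4
| HpT of 'I_n.-1.

(** Generators of Sahi's algebra : parameters, T_0..T_n (ShT i = T_i),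
    X_1..X_n (ShX j = X_{j+1}). *)
Inductive ShGen (n : nat) : Type :=
| ShP of Par
| ShT of 'I_n.+1
| ShX of 'I_n.

Section Relations.
Variables (n : nat) (A : unitAlgType C_fieldType).

Definition centralUnit (x : A) : Prop :=
  x \is a GRing.unit /\ forall y : A, x * y = y * x.

Definition comm (x y : A) : Prop := x * y = y * x.

Definition hpP (v : HpGen n -> A) (p : Par) : A := v (@HpP n p).
Definition hpU (v : HpGen n -> A) (k : nat) : A := v (@HpU n (inord k.-1)).
(* T_i for i = 1..n-1 (value 0 outside that range, never used) *)
Definition hpT (v : HpGen n -> A) (i : nat) : A :=
  if i is i'.+1 then oapp (fun j => v (HpT j)) 0 (insub i' : option 'I_n.-1)
  else 0.

Definition shP (v : ShGen n -> A) (p : Par) : A := v (@ShP n p).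
Definition shT (v : ShGen n -> A) (i : nat) : A :=
  oapp (fun j => v (ShT j)) 0 (insub i : option 'I_n.+1).
Definition shX (v : ShGen n -> A) (i : nat) : A :=
  if i is i'.+1 then oapp (fun j => v (ShX j)) 0 (insub i' : option 'I_n)
  else 0.

(** Defining relations of H_n' (H_n for D = D4~, specialized at
    u11 = q t0, u12 = -q t0^-1, u21 = u0, u22 = -u0^-1,
    u31 = un, u32 = -un^-1, u41 = tn, u42 = -tn^-1). *)
Definition HpRel (v : HpGen n -> A) : Prop :=
  let P := hpP v in let U := hpU v in let T := hpT v in
  let t := P Pt in let q := P Pq in
  let u1 k := match k with
              | 1 => q * P Pt0 | 2 => P Pu0 | 3 => P Pun | _ => P Ptn end in
  let u2 k := match k with
              | 1 => - (q * (P Pt0)^-1) | 2 => - (P Pu0)^-1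
              | 3 => - (P Pun)^-1 | _ => - (P Ptn)^-1 end in
  [/\ (forall p, centralUnit (P p)),
      (forall k, (1 <= k <= 4)%N -> U k \is a GRing.unit),
      (forall i, (1 <= i <= n.-1)%N -> T i \is a GRing.unit),
      (U 1 * U 2 * U 3 * U 4) *
        ((\prod_(i <- iota 1 (n - 2)%N) T i) * T (n - 1)%N * T (n - 1)%N *
         (\prod_(i <- rev (iota 1 (n - 2)%N)) T i)) = 1 &
   ([/\ (forall i, (1 <= i)%N -> (i + 1 <= n - 1)%N ->
         T i * T i.+1 * T i = T i.+1 * T i * T i.+1),
      (forall i j, (1 <= i <= n - 1)%N -> (1 <= j <= n - 1)%N -> (i.+1 < j)%N ->
         comm (T i) (T j)),
      (forall i j, (2 <= i <= n - 1)%N -> (1 <= j <= 4)%N -> comm (U j) (T i)),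
      (forall j, (1 <= j <= 4)%N -> comm (U j) (T 1 * U j * T 1)) &
      (forall k j, (1 <= k)%N -> (k < j)%N -> (j <= 4)%N ->
         comm (U k) ((T 1)^-1 * U j * T 1))] /\
   ((forall k, (1 <= k <= 4)%N -> (U k - u1 k) * (U k - u2 k) = 0) /\
      (forall i, (1 <= i <= n - 1)%N -> T i - (T i)^-1 = t - t^-1)))].

Definition ShRel (v : ShGen n -> A) : Prop :=
  let P := shP v in let T := shT v in let X := shX v in
  let t := P Pt in let q := P Pq in
  let t0 := P Pt0 in let tn := P Ptn in let u0 := P Pu0 in let un := P Pun in
  let Tnv := (X n)^-1 * (T n)^-1 in
  let T0v := q^-1 * (T 0)^-1 * X 1 in
  [/\ (forall p, centralUnit (P p)),
      (forall i, (i <= n)%N -> T i \is a GRing.unit),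
      (forall i, (1 <= i <= n)%N -> X i \is a GRing.unit),
      T 0 * T 1 * T 0 * T 1 = T 1 * T 0 * T 1 * T 0 &
   [/\ (forall i j, (1 <= i <= n)%N -> (1 <= j <= n)%N -> comm (X i) (X j)),
      T (n - 1)%N * T n * T (n - 1)%N * T n = T n * T (n - 1)%N * T n * T (n - 1)%N,
      (forall i, (1 <= i)%N -> (i <= n - 2)%N ->
         T i * T i.+1 * T i = T i.+1 * T i * T i.+1),
      (forall i j, (i <= n)%N -> (j <= n)%N -> (i.+1 < j)%N -> comm (T i) (T j)) &
   [/\ (forall i, (1 <= i <= n - 1)%N -> T i - (T i)^-1 = t - t^-1),
          T 0 - (T 0)^-1 = t0 - t0^-1,
          T n - (T n)^-1 = tn - tn^-1 &
   [/\   (forall i j, (i <= n)%N -> (1 <= j <= n)%N ->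
             ((i.+1 < j)%N \/ (j.+1 < i)%N \/ (i = n /\ j = (n - 1)%N)) ->
             T i * X j = X j * T i),
          (forall i, (1 <= i <= n - 1)%N -> T i * X i = X i.+1 * (T i)^-1),
          Tnv - Tnv^-1 = un - un^-1 &
          T0v - T0v^-1 = u0 - u0^-1]]]].

(** The map phi on generators, as an assignment of the generators of H_n'
    in terms of (an assignment of) the generators of Sahi's algebra. *)
Definition phi (v : ShGen n -> A) : HpGen n -> A :=
  let P := shP v in let T := shT v in let X := shX v in
  let q := P Pq in
  let S := \prod_(i <- iota 1 (n - 1)%N) T i in
  fun g => match g with
  | HpP p => P p
  | HpU k => match val k with
             | 0 => q * T 0
             | 1 => q^-1 * (T 0)^-1 * X 1                     (* U_2 |-> T_0^vee *)
             | 2 => S * ((X n)^-1 * (T n)^-1) * S^-1          (* U_3 |-> S T_n^vee S^-1 *)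
             | _ => S * T n * S^-1
             end
  | HpT j => T (val j).+1
  end.

End Relations.

From HB Require Import structures.
From mathcomp Require Import all_boot all_order all_algebra.
From mathcomp Require Import zify.
Import GRing.Theory.
Local Open Scope ring_scope.
Set Implicit Arguments. Unset Strict Implicit. Unset Printing Implicit Defensive.

(* The inverse psi of phi sends T_0 to q^-1 U_1, T_i to T_i for 0 < i < n,
   T_n to S^-1 U_4 S and X_j to (T_(j-1) ... T_1) (U_1 U_2) (T_1 ... T_(j-1)).
   In Sahi's algebra U_1 U_2 = X_1 and X_(i+1) = T_i X_i T_i, so the product
   relation of H_n' is the formula X_n = (T_(n-1) ... T_1) X_1 S.  Since
   T_(i+1) S = S T_i, conjugation by S turns an element commuting with
   T_1, ..., T_(n-2) and satisfying the length-4 braid relation with T_(n-1)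
   into one commuting with T_2, ..., T_(n-1) and satisfying it with T_1; this
   matches the relations of T_n and T_n^vee with those of U_4 and U_3.  The
   remaining relations are short braid-group computations, and for a central
   unit c the quadratic relation (x - c)(x + c^-1) = 0 is equivalent to
   x - x^-1 = c - c^-1. *)

Definition braid4 (R : pzRingType) (x y : R) := x * y * x * y = y * x * y * x.

Section WordIdentities.
Variable R : unitRingType.
Implicit Types a b c d r s x y B C D E : R.

(* Identities between words are used as rewrite rules on right-associated
   products, after padding both sides with [* 1] (see [rewrite -[LHS]mulr1]). *)
Lemma word2_rw a b a' b' : a * b = a' * b' -> forall r, a * (b * r) = a' * (b' * r).
Proof. by move=> h r; rewrite !mulrA h. Qed.

Lemma word3_rw a b c a' b' c' : a * b * c = a' * b' * c' ->
  forall r, a * (b * (c * r)) = a' * (b' * (c' * r)).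
Proof. by move=> h r; rewrite !mulrA h. Qed.

Lemma word4_rw a b c d a' b' c' d' : a * b * c * d = a' * b' * c' * d' ->
  forall r, a * (b * (c * (d * r))) = a' * (b' * (c' * (d' * r))).
Proof. by move=> h r; rewrite !mulrA h. Qed.

Lemma commV_rw x y : x \is a GRing.unit -> GRing.comm x y ->
  forall r, x^-1 * (y * r) = y * (x^-1 * r).
Proof. by move=> ux h; apply: word2_rw; apply/commr_sym/commrV/commr_sym. Qed.

Lemma commrMl a b x : GRing.comm a x -> GRing.comm b x -> GRing.comm (a * b) x.
Proof. by move=> ha hb; apply/commr_sym/commrM; apply/commr_sym. Qed.

Lemma commr_conj a b y : y \is a GRing.unit -> GRing.comm a b ->
  GRing.comm (y * a * y^-1) (y * b * y^-1).
Proof. by move=> uy h; rewrite /GRing.comm -!mulrA !mulKr // (word2_rw h). Qed.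

Lemma commr_conj_swap a b s : s \is a GRing.unit -> GRing.comm a (s^-1 * b * s) ->
  GRing.comm b (s * a * s^-1).
Proof.
move=> us h; apply/commr_sym.
by have := commr_conj us h; rewrite -!mulrA mulVKr // mulrV // mulr1.
Qed.

Lemma unitr_conj s x : s \is a GRing.unit -> x \is a GRing.unit ->
  s * x * s^-1 \is a GRing.unit.
Proof. by move=> us ux; rewrite !rpredM ?unitrV. Qed.

Lemma invrM3 a b c : a \is a GRing.unit -> b \is a GRing.unit -> c \is a GRing.unit ->
  (a * b * c)^-1 = c^-1 * b^-1 * a^-1.
Proof. by move=> ua ub uc; rewrite invrM ?rpredM // invrM // mulrA. Qed.

Lemma invrM4 a b c d : a \is a GRing.unit -> b \is a GRing.unit -> c \is a GRing.unit ->
  d \is a GRing.unit -> (a * b * c * d)^-1 = d^-1 * c^-1 * b^-1 * a^-1.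
Proof. by move=> ua ub uc ud; rewrite invrM ?rpredM // invrM3 // !mulrA. Qed.

Lemma hecke_quadE x c : x \is a GRing.unit -> c \is a GRing.unit -> GRing.comm c x ->
  (x - c) * (x + c^-1) = x * ((x - x^-1) - (c - c^-1)).
Proof.
move=> ux uc hcx; rewrite mulrBl !mulrDr !mulrN mulrBr hcx !mulrV //.
by rewrite opprD opprB -!addrA; congr (_ + _); rewrite addrA addrC.
Qed.

Lemma hecke_quadP x c : x \is a GRing.unit -> c \is a GRing.unit -> GRing.comm c x ->
  (x - c) * (x + c^-1) = 0 <-> x - x^-1 = c - c^-1.
Proof.
move=> ux uc hcx; rewrite hecke_quadE //; split=> [|->]; last by rewrite subrr mulr0.
by rewrite -(mulr0 x) => /(mulrI ux) /eqP; rewrite subr_eq0 => /eqP.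
Qed.

Lemma hecke_conj s x c : s \is a GRing.unit -> x \is a GRing.unit -> GRing.comm c s ->
  x - x^-1 = c - c^-1 -> s * x * s^-1 - (s * x * s^-1)^-1 = c - c^-1.
Proof.
move=> us ux hcs h; rewrite invrM3 ?unitrV // invrK -mulrBl -mulrBr h.
have hs : GRing.comm (c - c^-1) s.
  by apply/commr_sym/commrB; [apply/commr_sym | apply/commrV/commr_sym].
by rewrite -hs mulrK.
Qed.

Lemma hecke_conjV s x c : s \is a GRing.unit -> x \is a GRing.unit -> GRing.comm c s ->
  x - x^-1 = c - c^-1 -> s^-1 * x * s - (s^-1 * x * s)^-1 = c - c^-1.
Proof.
move=> us ux hcs; have usV : s^-1 \is a GRing.unit by rewrite unitrV.
by have := hecke_conj usV ux (commrV hcs); rewrite invrK.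
Qed.

Lemma braid4_sym x y : braid4 x y -> braid4 y x.
Proof. by []. Qed.

Lemma braid4_commr x y : braid4 x y <-> GRing.comm x (y * x * y).
Proof. by rewrite /braid4 /GRing.comm !mulrA. Qed.

Lemma braid4_mull c x y : (forall z, GRing.comm c z) -> braid4 x y -> braid4 (c * x) y.
Proof.
move=> hc h; have cM z r : z * (c * r) = c * (z * r) by rewrite !mulrA hc.
rewrite /braid4 -[LHS]mulr1 -[RHS]mulr1 -!mulrA ?(cM x, cM y).
by rewrite (word4_rw h).
Qed.

Lemma braid4_conj E T : T \is a GRing.unit -> braid4 E T -> braid4 (T * E * T^-1) T.
Proof.
move=> uT h; rewrite /braid4 -[LHS]mulr1 -[RHS]mulr1 -!mulrA !mulKr //.
by rewrite -[in RHS](word4_rw h) mulVKr.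
Qed.

Lemma braid4_conjV E T : T \is a GRing.unit -> braid4 E T -> braid4 (T^-1 * E * T) T.
Proof.
move=> uT h; rewrite /braid4 -[LHS]mulr1 -[RHS]mulr1 -!mulrA !mulVKr //.
by rewrite (word4_rw h) mulKr.
Qed.

Section BraidRelation.
Variables B C : R.
Hypotheses (uB : B \is a GRing.unit) (uC : C \is a GRing.unit)
  (hBC : B * C * B = C * B * C).

(* In the names below a lowercase letter stands for an inverse. *)
Lemma braid_cBC r : C^-1 * (B * (C * r)) = B * (C * (B^-1 * r)).
Proof. by apply: (mulrI uC); rewrite mulVKr // -(word3_rw hBC) mulVKr. Qed.

Lemma braid_bcB r : B^-1 * (C^-1 * (B * r)) = C * (B^-1 * (C^-1 * r)).
Proof.
apply: (mulrI uB); rewrite mulVKr //; apply: (mulrI uC); rewrite mulVKr //.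
by rewrite !mulrA -[C * B * C]hBC !mulrK.
Qed.

Lemma braid_CBc r : C * (B * (C^-1 * r)) = B^-1 * (C * (B * r)).
Proof. by apply: (mulrI uB); rewrite mulVKr // !mulrA hBC mulrK. Qed.

Lemma braid_Bcb r : B * (C^-1 * (B^-1 * r)) = C^-1 * (B^-1 * (C * r)).
Proof. by apply: (mulrI uC); rewrite mulVKr // braid_CBc mulVKr. Qed.

Lemma braid_bC r : B^-1 * (C * r) = C * (B * (C^-1 * (B^-1 * r))).
Proof. by apply: (mulrI uB); rewrite mulVKr // (word3_rw hBC) mulVKr // mulVKr. Qed.

Lemma braid4_shift D : GRing.comm B D -> braid4 D C -> braid4 (C * D * C^-1) B.
Proof.
move=> hBD hDC; rewrite /braid4 -[LHS]mulr1 -[RHS]mulr1 -!mulrA.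
rewrite !braid_cBC -!(word2_rw hBD) !(commV_rw uB hBD) braid_bcB.
by rewrite (word3_rw hBC) -(word4_rw hDC).
Qed.

Lemma braid4_shiftV D : GRing.comm B D -> braid4 D C -> braid4 (C^-1 * D * C) B.
Proof.
move=> hBD hDC; rewrite /braid4 -[LHS]mulr1 -[RHS]mulr1 -!mulrA.
rewrite !braid_CBc -!(commV_rw uB hBD) !(word2_rw hBD) (word3_rw hBC) braid_Bcb.
by rewrite (word4_rw hDC).
Qed.

Lemma commr_shift D E : GRing.comm B D -> GRing.comm B E ->
  GRing.comm D (C^-1 * E * C) ->
  GRing.comm (C * D * C^-1) (B^-1 * (C * E * C^-1) * B).
Proof.
move=> hBD hBE hDE.
have -> : B^-1 * (C * E * C^-1) * B = C * (B * (C^-1 * E * C) * B^-1) * C^-1.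
  rewrite -[LHS]mulr1 -[RHS]mulr1 -!mulrA.
  by rewrite braid_bC (commV_rw uB hBE) braid_bcB.
apply: commr_conj => //; apply: commrM; first apply: commrM.
- exact/commr_sym.
- exact: hDE.
- exact/commrV/commr_sym.
Qed.

Lemma commr_braid_up Y : GRing.comm C Y -> GRing.comm B (C * (B * Y * B) * C).
Proof.
move=> hCY; rewrite /GRing.comm -[LHS]mulr1 -[RHS]mulr1 -!mulrA.
by rewrite (word3_rw hBC) (word2_rw hCY) [in RHS](word3_rw hBC).
Qed.

Lemma commr_braid_down Y : GRing.comm B (C * (B * Y * B) * C) -> GRing.comm C Y.
Proof.
have uBC : B * C \is a GRing.unit by rewrite rpredM.
rewrite /GRing.comm -[LHS]mulr1 -[RHS]mulr1 -!mulrA.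
rewrite (word3_rw hBC) [in RHS](word3_rw hBC) => /(mulrI uC) /(mulrI uB) h.
by apply: (mulIr uBC); rewrite -[LHS]mulr1 -[RHS]mulr1 -!mulrA.
Qed.

End BraidRelation.

(* Shapes of T_0^vee (a, s, x = T_0, T_1, X_1, so s x s = X_2) and of
   T_n^vee = X_n^-1 T_n^-1 (a, b, x = T_(n-1), T_n, X_(n-1)). *)
Lemma braid4_T0dual a s x : a \is a GRing.unit -> s \is a GRing.unit ->
  GRing.comm a (s * x * s) -> GRing.comm x (s * x * s) -> braid4 a s ->
  braid4 (a^-1 * x) s.
Proof.
move=> ua us hay hxy has; move: hay hxy; move Ey : (s * x * s) => y hay hxy.
have xs r : x * (s * r) = s^-1 * (y * r) by rewrite -Ey -!mulrA mulKr.
have ys r : y * (s^-1 * r) = s * (x * r) by rewrite -Ey -!mulrA mulVKr.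
have asV r : a^-1 * (s^-1 * (a^-1 * (s * r))) = s * (a^-1 * (s^-1 * (a^-1 * r))).
  have hV : s^-1 * a^-1 * s^-1 * a^-1 = a^-1 * s^-1 * a^-1 * s^-1.
    by rewrite -!invrM4 // has.
  by apply: (mulrI (_ : s^-1 \is a GRing.unit)); rewrite ?unitrV // mulKr // (word4_rw hV) mulKr.
rewrite /braid4 -[LHS]mulr1 -[RHS]mulr1 -!mulrA.
by rewrite !xs -!(commV_rw ua hay) ys (word2_rw hxy) -asV.
Qed.

Lemma commr_T0dual a s x : a \is a GRing.unit -> s \is a GRing.unit ->
  GRing.comm a (s * x * s) -> braid4 a s -> GRing.comm a (s^-1 * (a^-1 * x) * s).
Proof.
move=> ua us hay has.
have -> : s^-1 * (a^-1 * x) * s = (s * a * s)^-1 * (s * x * s).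
  by rewrite invrM3 // -!mulrA mulKr.
by apply: commrM => //; apply/commrV/braid4_commr.
Qed.

Lemma commr_Tndual a b x : a \is a GRing.unit -> b \is a GRing.unit -> x \is a GRing.unit ->
  GRing.comm x b -> braid4 a b -> GRing.comm ((a * x * a)^-1 * b^-1) (a^-1 * b * a).
Proof.
move=> ua ub ux hxb hab.
have bab r : a^-1 * (b^-1 * (a^-1 * (b * (a * r)))) = b * (a^-1 * (b^-1 * r)).
  have e : a^-1 * b^-1 * a^-1 * b * a = b * a^-1 * b^-1.
    apply: (mulIr (_ : b * a \is a GRing.unit)); first by rewrite rpredM.
    by rewrite -[LHS]mulr1 -[RHS]mulr1 -!mulrA -(word4_rw hab) !mulKr.
  by have := word3_rw (e : (a^-1 * b^-1 * a^-1 * b) * a = (b * a^-1) * b^-1) r; rewrite -!mulrA.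
rewrite /GRing.comm invrM3 // -[LHS]mulr1 -[RHS]mulr1 -!mulrA.
by rewrite bab mulVKr // (commV_rw ux hxb).
Qed.

Lemma braid4_Tndual a b x : a \is a GRing.unit -> b \is a GRing.unit -> x \is a GRing.unit ->
  GRing.comm x b -> braid4 a b -> braid4 x a -> braid4 ((a * x * a)^-1 * b^-1) a.
Proof.
move=> ua ub ux hxb hab hxa.
have xaV : forall r, a^-1 * (x^-1 * (a^-1 * (x^-1 * r))) = x^-1 * (a^-1 * (x^-1 * (a^-1 * r))).
  by apply: word4_rw; rewrite -!invrM4 // hxa.
have abV : forall r, a^-1 * (b^-1 * (a^-1 * (b^-1 * r))) = b^-1 * (a^-1 * (b^-1 * (a^-1 * r))).
  by apply: word4_rw; rewrite -!invrM4 // hab.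
rewrite /braid4 invrM3 // -[LHS]mulr1 -[RHS]mulr1 -!mulrA.
by rewrite !mulVKr // -!(commV_rw ux (commrV hxb)) xaV abV mulKr.
Qed.

End WordIdentities.

Definition braidA (R : unitRingType) (n : nat) (T : nat -> R) : Prop :=
  [/\ forall i, (0 < i < n)%N -> T i \is a GRing.unit,
      forall i, (0 < i)%N -> (i.+1 < n)%N -> T i * T i.+1 * T i = T i.+1 * T i * T i.+1 &
      forall i j, (0 < i)%N -> (i.+1 < j)%N -> (j < n)%N -> GRing.comm (T i) (T j)].

Section BraidProducts.
Variables (R : unitRingType) (n : nat) (T : nat -> R).

Definition ascprod k m := \prod_(i <- iota k m) T i.
Definition descprod k m := \prod_(i <- rev (iota k m)) T i.

Lemma ascprod0 k : ascprod k 0 = 1. Proof. by rewrite /ascprod big_nil. Qed.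
Lemma ascprodS k m : ascprod k m.+1 = T k * ascprod k.+1 m.
Proof. by rewrite /ascprod /= big_cons. Qed.
Lemma ascprodSr k m : ascprod k m.+1 = ascprod k m * T (k + m).
Proof. by rewrite /ascprod -addn1 iotaD big_cat /= big_seq1. Qed.
Lemma descprod0 k : descprod k 0 = 1. Proof. by rewrite /descprod big_nil. Qed.
Lemma descprodS k m : descprod k m.+1 = descprod k.+1 m * T k.
Proof. by rewrite /descprod /= rev_cons -cats1 big_cat /= big_seq1. Qed.
Lemma descprodSr k m : descprod k m.+1 = T (k + m) * descprod k m.
Proof. by rewrite /descprod -addn1 iotaD rev_cat big_cat /= big_seq1. Qed.

Lemma commr_ascprod x k m : (forall i, (k <= i < k + m)%N -> GRing.comm x (T i)) ->
  GRing.comm x (ascprod k m).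
Proof.
move=> h; rewrite /ascprod big_seq; apply: (big_ind (GRing.comm x)) => //.
- exact: commr1.
- exact: commrM.
by move=> i; rewrite mem_iota => /h.
Qed.

Lemma commr_descprod x k m : (forall i, (k <= i < k + m)%N -> GRing.comm x (T i)) ->
  GRing.comm x (descprod k m).
Proof.
move=> h; rewrite /descprod big_seq; apply: (big_ind (GRing.comm x)) => //.
- exact: commr1.
- exact: commrM.
by move=> i; rewrite mem_rev mem_iota => /h.
Qed.

Lemma ascprod_mul_descprodE : (1 < n)%N ->
  ascprod 1 (n - 1) * descprod 1 (n - 1) =
  (\prod_(i <- iota 1 (n - 2)) T i) * T (n - 1) * T (n - 1) *
  (\prod_(i <- rev (iota 1 (n - 2))) T i).
Proof.
move=> hn; have e : (n - 1 = (n - 2).+1)%N by lia.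
by rewrite e ascprodSr descprodSr add1n !mulrA.
Qed.

Hypothesis hT : braidA n T.
Let T_unit i : (0 < i < n)%N -> T i \is a GRing.unit.
Proof. by case: hT => h _ _; apply: h. Qed.
Let T_braid i : (0 < i)%N -> (i.+1 < n)%N -> T i * T i.+1 * T i = T i.+1 * T i * T i.+1.
Proof. by case: hT => _ h _; apply: h. Qed.
Let T_comm i j : (0 < i)%N -> (i.+1 < j)%N -> (j < n)%N -> GRing.comm (T i) (T j).
Proof. by case: hT => _ _ h; apply: h. Qed.

Lemma ascprod_unit k m : (0 < k)%N -> (k + m <= n)%N -> ascprod k m \is a GRing.unit.
Proof.
move=> hk hkm; rewrite /ascprod big_seq; apply: rpred_prod => i.
by rewrite mem_iota => hi; apply: T_unit; lia.
Qed.

Lemma descprod_unit k m : (0 < k)%N -> (k + m <= n)%N -> descprod k m \is a GRing.unit.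
Proof.
move=> hk hkm; rewrite /descprod big_seq; apply: rpred_prod => i.
by rewrite mem_rev mem_iota => hi; apply: T_unit; lia.
Qed.

Lemma T_ascprod i k m : (0 < k)%N -> (k < i)%N -> (i < k + m)%N -> (k + m <= n)%N ->
  T i * ascprod k m = ascprod k m * T i.-1.
Proof.
elim: m k => [|m IH] k hk hki him hmn; first by lia.
rewrite ascprodS; case: (ltnP k.+1 i) => hi.
  have hin : (i < n)%N by lia.
  by rewrite mulrA -(T_comm hk hi hin) -mulrA IH ?mulrA //; lia.
have ei : i = k.+1 by lia.
subst i; case: m IH him hmn => [|m] IH him hmn; first by lia.
rewrite ascprodS /= !mulrA -T_braid //; last by lia.
rewrite -!mulrA; congr (_ * (_ * _)).
by apply: commr_ascprod => j hj; apply: T_comm; lia.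
Qed.

Lemma T_ascprodV i k m : (0 < k)%N -> (k < i)%N -> (i < k + m)%N -> (k + m <= n)%N ->
  T i.-1 * (ascprod k m)^-1 = (ascprod k m)^-1 * T i.
Proof.
move=> hk hki him hmn; have uP := ascprod_unit hk hmn.
by apply: (mulrI uP); rewrite mulrA -T_ascprod // mulrK // mulVKr.
Qed.

Definition tailconj k D := ascprod k (n - k) * D * (ascprod k (n - k))^-1.

Lemma tailconj_n D : tailconj n D = D.
Proof. by rewrite /tailconj subnn ascprod0 invr1 mulr1 mul1r. Qed.

Lemma tailconjS k D : (0 < k < n)%N -> tailconj k D = T k * tailconj k.+1 D * (T k)^-1.
Proof.
move=> /andP [hk hkn]; have e : (n - k = (n - k.+1).+1)%N by lia.
have uP : ascprod k.+1 (n - k.+1) \is a GRing.unit by apply: ascprod_unit; lia.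
by rewrite /tailconj e ascprodS invrM ?T_unit ?hk // !mulrA.
Qed.

Lemma commr_tailconj x k D : (0 < k)%N ->
  (forall j, (k <= j < n)%N -> GRing.comm x (T j)) -> GRing.comm x D ->
  GRing.comm x (tailconj k D).
Proof.
move=> hk h hD; have hP : GRing.comm x (ascprod k (n - k)).
  by apply: commr_ascprod => j hj; apply: h; lia.
by apply: commrM; [apply: commrM | apply: commrV].
Qed.

Lemma commr_tailconj_shift i k D : (0 < k)%N -> (k < i)%N -> (i < n)%N ->
  GRing.comm (T i.-1) D -> GRing.comm (T i) (tailconj k D).
Proof.
move=> hk hki hin hD; have hkn : (i < k + (n - k))%N by lia.
have hnk : (k + (n - k) <= n)%N by lia.
rewrite /GRing.comm /tailconj !mulrA (T_ascprod hk hki hkn hnk) -[_ * T i.-1 * D]mulrA hD.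
by rewrite -!mulrA (T_ascprodV hk hki hkn hnk).
Qed.

Lemma braid4_tailconj D : (1 < n)%N -> braid4 D (T n.-1) ->
  (forall j, (0 < j < n.-1)%N -> GRing.comm (T j) D) ->
  braid4 (tailconj 1 D) (T 1).
Proof.
move=> hn hD hTD.
have ind d k : (k + d = n.-1)%N -> (0 < k)%N -> braid4 (tailconj k.+1 D) (T k).
  elim: d k => [|d IH] k hkd hk.
    have -> : k.+1 = n by lia.
    by rewrite tailconj_n; move: hkd; rewrite addn0 => ->.
  rewrite tailconjS; last by lia.
  apply: braid4_shift; rewrite ?T_unit ?T_braid //; try lia.
    by apply: commr_tailconj => // [j hj|]; [apply: T_comm | apply: hTD]; lia.
  by apply: IH; lia.
rewrite tailconjS; last by lia.
apply: braid4_conj; first by apply: T_unit; lia.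
by apply: (ind (n.-1 - 1)%N 1); lia.
Qed.

Lemma commr_tailconj_conj D E : (1 < n)%N ->
  (forall j, (0 < j < n.-1)%N -> GRing.comm (T j) D) ->
  (forall j, (0 < j < n.-1)%N -> GRing.comm (T j) E) ->
  GRing.comm D ((T n.-1)^-1 * E * T n.-1) ->
  GRing.comm (tailconj 1 D) ((T 1)^-1 * tailconj 1 E * T 1).
Proof.
move=> hn hTD hTE hDE.
have ind d k : (k + d = n.-1)%N -> (0 < k)%N ->
    GRing.comm (tailconj k.+1 D) ((T k)^-1 * tailconj k.+1 E * T k).
  elim: d k => [|d IH] k hkd hk.
    have -> : k.+1 = n by lia.
    by rewrite !tailconj_n; move: hkd; rewrite addn0 => ->.
  have hk1 : (0 < k.+1 < n)%N by lia.
  rewrite !(tailconjS _ hk1); apply: commr_shift; rewrite ?T_unit ?T_braid //; try lia.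
  - by apply: commr_tailconj => // [j hj|]; [apply: T_comm | apply: hTD]; lia.
  - by apply: commr_tailconj => // [j hj|]; [apply: T_comm | apply: hTE]; lia.
  - by apply: IH; lia.
have u1 : T 1 \is a GRing.unit by apply: T_unit; lia.
have h1 : (0 < 1 < n)%N by lia.
have := ind (n.-1 - 1)%N 1 _ isT; rewrite !(tailconjS _ h1).
move: (tailconj 2 D) (tailconj 2 E) => a b h.
have -> : (T 1)^-1 * (T 1 * b * (T 1)^-1) * T 1 = b.
  by rewrite -!mulrA mulKr // mulVr // mulr1.
have := commr_conj u1 (h _); rewrite -!mulrA mulVKr // mulrV // mulr1 !mulrA.
by apply; lia.
Qed.

Definition headconjV k U := (ascprod 1 k)^-1 * U * ascprod 1 k.

Lemma headconjV0 U : headconjV 0 U = U.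
Proof. by rewrite /headconjV ascprod0 invr1 mulr1 mul1r. Qed.

Lemma headconjVS k U : (k.+1 < n)%N ->
  headconjV k.+1 U = (T k.+1)^-1 * headconjV k U * T k.+1.
Proof.
move=> hk; have uP : ascprod 1 k \is a GRing.unit by apply: ascprod_unit; lia.
have uT : T k.+1 \is a GRing.unit by apply: T_unit; lia.
by rewrite /headconjV ascprodSr add1n invrM // !mulrA.
Qed.

Lemma braid4_headconjV U : (1 < n)%N -> braid4 U (T 1) ->
  (forall j, (1 < j < n)%N -> GRing.comm (T j) U) ->
  braid4 (headconjV n.-1 U) (T n.-1).
Proof.
move=> hn hU hTU.
have ind k : (k.+1 < n)%N -> braid4 (headconjV k U) (T k.+1).
  elim: k => [|k IH] hk; first by rewrite headconjV0.
  rewrite headconjVS; last by lia.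
  apply: braid4_shiftV; rewrite ?T_unit //; try lia.
  - by rewrite -T_braid //; lia.
  - rewrite /headconjV; apply: commrM; first apply: commrM.
    + by apply/commrV/commr_ascprod => j hj; apply/commr_sym/T_comm; lia.
    + by apply: hTU; lia.
    + by apply: commr_ascprod => j hj; apply/commr_sym/T_comm; lia.
  - by apply: IH; lia.
have e : n.-1 = (n.-2).+1 by lia.
rewrite {1}e headconjVS -e; last by lia.
by apply: braid4_conjV; [apply: T_unit; lia | rewrite {2}e; apply: ind; lia].
Qed.

Lemma commr_headconjV U i : (1 < n)%N -> (0 < i)%N -> (i < n.-1)%N ->
  (forall j, (1 < j < n)%N -> GRing.comm (T j) U) ->
  GRing.comm (T i) (headconjV n.-1 U).
Proof.
move=> hn hi hin hTU; have h1 : (0 < 1)%N by [].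
have hi1 : (1 < i.+1)%N by lia.
have hin1 : (i.+1 < 1 + n.-1)%N by lia.
have hn1 : (1 + n.-1 <= n)%N by lia.
rewrite /GRing.comm /headconjV !mulrA (T_ascprodV h1 hi1 hin1 hn1).
rewrite -[_ * T i.+1 * U]mulrA hTU; last by lia.
by rewrite -!mulrA (T_ascprod h1 hi1 hin1 hn1).
Qed.

End BraidProducts.

Section Generators.
Variables (n : nat) (A : unitAlgType C_fieldType).

Lemma hpT_gen (w : HpGen n -> A) i (j : 'I_n.-1) : (0 < i)%N -> val j = i.-1 ->
  hpT w i = w (HpT j).
Proof.
case: i => // i _ /= e; case: insubP => [k _ vk|]; last by rewrite -e ltn_ord.
by congr (w (HpT _)); apply: val_inj; rewrite /= vk e.
Qed.

Lemma shT_gen (v : ShGen n -> A) i : (i <= n)%N -> shT v i = v (ShT (inord i)).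
Proof.
move=> hi; rewrite /shT; case: insubP => [j _ vj|]; last by rewrite /=; lia.
by congr (v (ShT _)); apply: val_inj; rewrite /= vj inordK //; lia.
Qed.

Lemma shX_gen (v : ShGen n -> A) i (j : 'I_n) : (0 < i)%N -> val j = i.-1 ->
  shX v i = v (ShX j).
Proof.
case: i => // i _ /= e; case: insubP => [k _ vk|]; last by rewrite -e ltn_ord.
by congr (v (ShX _)); apply: val_inj; rewrite /= vk e.
Qed.

Variable v : ShGen n -> A.
Local Notation S := (ascprod (shT v) 1 (n - 1)).

Lemma hpT_phi i : (0 < i < n)%N -> hpT (phi v) i = shT v i.
Proof.
case: i => // i /andP [_ hi] /=; case: insubP => [k _ vk|]; last by rewrite /=; lia.
by rewrite /= vk.
Qed.

Lemma ascprod_phi m : (m < n)%N -> ascprod (hpT (phi v)) 1 m = ascprod (shT v) 1 m.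
Proof. by move=> hm; apply: eq_big_seq => i; rewrite mem_iota => hi; apply: hpT_phi; lia. Qed.

Lemma descprod_phi m : (m < n)%N -> descprod (hpT (phi v)) 1 m = descprod (shT v) 1 m.
Proof.
by move=> hm; apply: eq_big_seq => i; rewrite mem_rev mem_iota => hi; apply: hpT_phi; lia.
Qed.

Lemma hpU1_phi : hpU (phi v) 1 = shP v Pq * shT v 0.
Proof. by rewrite /hpU /phi /= inordK. Qed.
Lemma hpU2_phi : hpU (phi v) 2 = (shP v Pq)^-1 * (shT v 0)^-1 * shX v 1.
Proof. by rewrite /hpU /phi /= inordK. Qed.
Lemma hpU3_phi : hpU (phi v) 3 = S * ((shX v n)^-1 * (shT v n)^-1) * S^-1.
Proof. by rewrite /hpU /phi /= inordK. Qed.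
Lemma hpU4_phi : hpU (phi v) 4 = S * shT v n * S^-1.
Proof. by rewrite /hpU /phi /= inordK. Qed.

End Generators.

Section Psi.
Variables (n : nat) (hn : (1 < n)%N).

(* Out-of-range indices give a default generator; psi only uses in-range ones. *)
Definition ordT (i : nat) : 'I_n.-1 := insubd (Ordinal (etrans (ltn_predRL 0 n) hn)) i.
Definition ordX (i : nat) : 'I_n := insubd (Ordinal (ltnW hn)) i.

Lemma val_ordT i : (i < n.-1)%N -> val (ordT i) = i.
Proof. by move=> hi; rewrite val_insubd hi. Qed.
Lemma val_ordX i : (i < n)%N -> val (ordX i) = i.
Proof. by move=> hi; rewrite val_insubd hi. Qed.

Local Notation term := (term (HpGen n)).

Definition termT (i : nat) : term := Gen (HpT (ordT i.-1)).
Definition termTV (i : nat) : term := GenInv (HpT (ordT i.-1)).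
Definition termU (k : nat) : term := Gen (HpU n (inord k.-1)).
Definition term_prod (s : seq term) : term := foldr (fun a b => Mul a b) (Cst _ 1) s.
Definition term_ascprod (j : nat) : term := term_prod (map termT (iota 1 j)).
Definition term_descprod (j : nat) : term := term_prod (map termT (rev (iota 1 j))).
Definition termS : term := term_ascprod (n - 1).
Definition termSV : term := term_prod (map termTV (rev (iota 1 (n - 1)))).

Definition psiT (i : nat) : term :=
  if i == 0%N then Mul (GenInv (HpP n Pq)) (termU 1)
  else if (i < n)%N then termT i
  else Mul (Mul termSV (termU 4)) termS.
Definition psiX (j : nat) : term :=
  Mul (Mul (term_descprod j) (Mul (termU 1) (termU 2))) (term_ascprod j).
Definition psi (h : ShGen n) : term :=
  match h with
  | ShP p => Gen (HpP n p)
  | ShT i => psiT (val i)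
  | ShX j => psiX (val j)
  end.

Section Eval.
Variables (A : unitAlgType C_fieldType) (w : HpGen n -> A).
Local Notation T := (hpT w).

Lemma eval_term_prod s : eval w (term_prod s) = \prod_(t <- s) eval w t.
Proof.
elim: s => [|a s IH]; first by rewrite big_nil /= scale1r.
by rewrite big_cons /= IH.
Qed.

Lemma eval_termT i : (0 < i < n)%N -> eval w (termT i) = T i.
Proof. by move=> hi; rewrite /= (hpT_gen _ (j := ordT i.-1)) // ?val_ordT //; lia. Qed.

Lemma eval_termTV i : (0 < i < n)%N -> eval w (termTV i) = (T i)^-1.
Proof. by move=> hi; rewrite /= (hpT_gen _ (j := ordT i.-1)) // ?val_ordT //; lia. Qed.

Lemma eval_term_ascprod j : (j < n)%N -> eval w (term_ascprod j) = ascprod T 1 j.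
Proof.
move=> hj; rewrite eval_term_prod big_map; apply: eq_big_seq => i.
by rewrite mem_iota => hi; apply: eval_termT; lia.
Qed.

Lemma eval_term_descprod j : (j < n)%N -> eval w (term_descprod j) = descprod T 1 j.
Proof.
move=> hj; rewrite eval_term_prod big_map; apply: eq_big_seq => i.
by rewrite mem_rev mem_iota => hi; apply: eval_termT; lia.
Qed.

Lemma eval_termS : eval w termS = ascprod T 1 (n - 1).
Proof. by apply: eval_term_ascprod; lia. Qed.

Lemma eval_termSV : (forall i, (0 < i < n)%N -> T i \is a GRing.unit) ->
  eval w termSV = (ascprod T 1 (n - 1))^-1.
Proof.
move=> hu; rewrite eval_term_prod big_map big_seq.
rewrite (eq_bigr (fun i => (T i)^-1)); last first.
  by move=> i; rewrite mem_rev mem_iota => hi; apply: eval_termTV; lia.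
rewrite rev_prodrV => [|i]; last by rewrite mem_rev mem_iota => hi; apply: hu; lia.
by rewrite rev_prodr revK /ascprod big_seq; congr (_^-1); apply: eq_bigl => i; rewrite mem_rev.
Qed.
End Eval.
End Psi.

Module PhiRel.
Section PhiRel.
Variables (n : nat) (hn : (1 < n)%N) (A : unitAlgType C_fieldType) (v : ShGen n -> A).
Hypothesis H : ShRel v.
Local Notation T := (shT v).
Local Notation X := (shX v).
Local Notation P := (shP v).
Local Notation q := (P Pq).

Ltac relations := move: H; rewrite /ShRel;
  case=> h0 h1 h2 h3 [h4 h5 h6 h7 [h8 h9 h10 [h11 h12 h13 h14]]].

Lemma par_central p : centralUnit (P p). Proof. by relations; apply: h0. Qed.
Lemma par_unit p : P p \is a GRing.unit. Proof. exact: (proj1 (par_central p)). Qed.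
Lemma par_comm p y : GRing.comm (P p) y. Proof. exact: (proj2 (par_central p) y). Qed.
Lemma parV_comm p y : GRing.comm (P p)^-1 y.
Proof. exact/commr_sym/commrV/commr_sym/par_comm. Qed.
Lemma T_unit i : (i <= n)%N -> T i \is a GRing.unit. Proof. by relations; apply: h1. Qed.
Lemma X_unit i : (0 < i <= n)%N -> X i \is a GRing.unit. Proof. by relations; apply: h2. Qed.
Lemma braid4_T0T1 : braid4 (T 0) (T 1). Proof. by relations. Qed.
Lemma commr_X i j : (1 <= i <= n)%N -> (1 <= j <= n)%N -> GRing.comm (X i) (X j).
Proof. by relations; apply: h4. Qed.
Lemma braid4_Tn : braid4 (T (n - 1)) (T n). Proof. by relations. Qed.
Lemma T_braid i : (1 <= i)%N -> (i <= n - 2)%N -> T i * T i.+1 * T i = T i.+1 * T i * T i.+1.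
Proof. by relations; apply: h6. Qed.
Lemma T_comm i j : (i <= n)%N -> (j <= n)%N -> (i.+1 < j)%N -> GRing.comm (T i) (T j).
Proof. by relations; apply: h7. Qed.
Lemma hecke_T i : (1 <= i <= n - 1)%N -> T i - (T i)^-1 = P Pt - (P Pt)^-1.
Proof. by relations; apply: h8. Qed.
Lemma hecke_T0 : T 0 - (T 0)^-1 = P Pt0 - (P Pt0)^-1. Proof. by relations. Qed.
Lemma hecke_Tn : T n - (T n)^-1 = P Ptn - (P Ptn)^-1. Proof. by relations. Qed.
Lemma commr_TX i j : (i <= n)%N -> (1 <= j <= n)%N ->
  (i.+1 < j)%N \/ (j.+1 < i)%N \/ (i = n /\ j = (n - 1)%N) -> GRing.comm (T i) (X j).
Proof. by relations; apply: h11. Qed.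
Lemma TX_twist i : (1 <= i <= n - 1)%N -> T i * X i = X i.+1 * (T i)^-1.
Proof. by relations; apply: h12. Qed.
Lemma hecke_Tnv : (X n)^-1 * (T n)^-1 - ((X n)^-1 * (T n)^-1)^-1 = P Pun - (P Pun)^-1.
Proof. by relations. Qed.
Lemma hecke_T0v : q^-1 * (T 0)^-1 * X 1 - (q^-1 * (T 0)^-1 * X 1)^-1 = P Pu0 - (P Pu0)^-1.
Proof. by relations. Qed.

Lemma braidA_T : braidA n T.
Proof.
split=> [i hi | i hi1 hi2 | i j hi hij hj]; first by apply: T_unit; lia.
- by apply: T_braid; lia.
- by apply: T_comm; lia.
Qed.

Lemma X_succ i : (0 < i < n)%N -> X i.+1 = T i * X i * T i.
Proof. by move=> hi; rewrite TX_twist ?mulrVK ?T_unit //; lia. Qed.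

Lemma commr_T_X1 i : (1 < i < n)%N -> GRing.comm (T i) (X 1).
Proof.
move=> /andP [h1 h2]; case: (ltnP 2 i) => hi.
  by apply: commr_TX; [lia | lia | right; left; lia].
have -> : i = 2 by lia.
apply: (commr_braid_down (B := T 1)); rewrite ?T_unit ?T_braid //; try lia.
by rewrite -!X_succ; [apply: commr_TX; [| | left] | |]; lia.
Qed.

Lemma X_descprod k : (k < n)%N -> X k.+1 = descprod T 1 k * X 1 * ascprod T 1 k.
Proof.
elim: k => [|k IH] hk; first by rewrite descprod0 ascprod0 mul1r mulr1.
by rewrite X_succ ?IH ?descprodSr ?ascprodSr ?add1n ?mulrA //; lia.
Qed.

Local Notation S := (ascprod T 1 (n - 1)).
Local Notation S' := (descprod T 1 (n - 1)).
Local Notation Tnv := ((X n)^-1 * (T n)^-1).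

Lemma X_n : X n = S' * X 1 * S.
Proof. by rewrite -X_descprod; [congr X; lia | lia]. Qed.
Lemma S_unit : S \is a GRing.unit. Proof. by apply: (ascprod_unit braidA_T); lia. Qed.
Lemma S'_unit : S' \is a GRing.unit. Proof. by apply: (descprod_unit braidA_T); lia. Qed.
Lemma tailconj1E D : tailconj n T 1 D = S * D * S^-1. Proof. by []. Qed.

Lemma Tnv_unit : Tnv \is a GRing.unit.
Proof. by rewrite rpredM // unitrV ?X_unit ?T_unit //; lia. Qed.

Lemma commr_T_Tn j : (j < n - 1)%N -> GRing.comm (T j) (T n).
Proof. by move=> hj; apply: T_comm; lia. Qed.

Lemma commr_T_Tnv j : (j < n - 1)%N -> GRing.comm (T j) Tnv.
Proof.
move=> hj; apply: commrM; apply: commrV; last exact: commr_T_Tn.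
by apply: commr_TX; [lia | lia | left; lia].
Qed.

Lemma commr_X1_Tn : GRing.comm (X 1) (T n).
Proof.
apply/commr_sym/commr_TX; [lia | lia |].
by case: (ltnP 2 n) => h; [right; left | right; right; split]; lia.
Qed.

Lemma commr_X1_Tnv : GRing.comm (X 1) Tnv.
Proof. by apply: commrM; apply: commrV; [apply: commr_X; lia | exact: commr_X1_Tn]. Qed.

Lemma X_n_pred : X n = T (n - 1) * X (n - 1) * T (n - 1).
Proof. by rewrite -X_succ; [congr X; lia | lia]. Qed.

Lemma commr_Xn1_Tn : GRing.comm (X (n - 1)) (T n).
Proof. by apply/commr_sym/commr_TX; [lia | lia | right; right]. Qed.

Lemma braid4_Tnv : braid4 Tnv (T (n - 1)).
Proof.
rewrite X_n_pred; apply: braid4_Tndual; rewrite ?T_unit ?X_unit //; try lia.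
- exact: commr_Xn1_Tn.
- exact: braid4_Tn.
- by apply/braid4_commr; rewrite -X_n_pred; apply: commr_X; lia.
Qed.

Lemma commr_Tnv_conj : GRing.comm Tnv ((T (n - 1))^-1 * T n * T (n - 1)).
Proof.
rewrite X_n_pred; apply: commr_Tndual; rewrite ?T_unit ?X_unit //; try lia.
- exact: commr_Xn1_Tn.
- exact: braid4_Tn.
Qed.

Lemma conjV_tailconj1 D : (T 1)^-1 * tailconj n T 1 D * T 1 = tailconj n T 2 D.
Proof.
have u1 : T 1 \is a GRing.unit by apply: T_unit; lia.
rewrite (tailconjS braidA_T); last by lia.
by move: (tailconj n T 2 D) => Z; rewrite -!mulrA mulKr // mulVr // mulr1.
Qed.

Lemma commr_tailconj2 x D : (forall j, (1 < j < n)%N -> GRing.comm x (T j)) ->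
  GRing.comm x D -> GRing.comm x (tailconj n T 2 D).
Proof. by move=> h hD; apply: commr_tailconj => // j hj; apply: h; lia. Qed.

Local Notation U := (hpU (phi v)).
Local Notation Tphi := (hpT (phi v)).

Lemma U1_unit : U 1 \is a GRing.unit.
Proof. by rewrite hpU1_phi rpredM ?par_unit ?T_unit. Qed.
Lemma U2_unit : U 2 \is a GRing.unit.
Proof. by rewrite hpU2_phi !rpredM ?unitrV ?par_unit ?T_unit ?X_unit //; lia. Qed.
Lemma U3_unit : U 3 \is a GRing.unit.
Proof. by rewrite hpU3_phi; apply: unitr_conj; [exact: S_unit | exact: Tnv_unit]. Qed.
Lemma U4_unit : U 4 \is a GRing.unit.
Proof. by rewrite hpU4_phi; apply: unitr_conj; [exact: S_unit | exact: T_unit]. Qed.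

Lemma U1U2 : U 1 * U 2 = X 1.
Proof.
rewrite hpU1_phi hpU2_phi; have uq := par_unit Pq; have u0 := T_unit (leq0n n).
by rewrite -!mulrA -(word2_rw (parV_comm Pq (T 0))) !mulVKr.
Qed.

Lemma prod_relation_phi : (U 1 * U 2 * U 3 * U 4) *
   ((\prod_(i <- iota 1 (n - 2)) Tphi i) * Tphi (n - 1)%N * Tphi (n - 1)%N *
    (\prod_(i <- rev (iota 1 (n - 2))) Tphi i)) = 1.
Proof.
rewrite -ascprod_mul_descprodE // ascprod_phi ?descprod_phi; try lia.
have un := T_unit (leqnn n); have u1 : X 1 \is a GRing.unit by apply: X_unit; lia.
have uS := S_unit; have uS' := S'_unit.
rewrite U1U2 hpU3_phi hpU4_phi X_n invrM3 // -[LHS]mulr1 -!mulrA.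
by rewrite !mulKr // !mulVKr.
Qed.

Lemma commr_U_T i j : (2 <= i <= n - 1)%N -> (1 <= j <= 4)%N -> GRing.comm (U j) (Tphi i).
Proof.
move=> hi hj; rewrite hpT_phi; last by lia.
have hT := braidA_T; apply/commr_sym.
case: j hj => [|[|[|[|[|j]]]]] //= _.
- rewrite hpU1_phi; apply: commrM; [exact/commr_sym/par_comm | apply/commr_sym/T_comm; lia].
- rewrite hpU2_phi; apply: commrM; last by apply: commr_T_X1; lia.
  apply: commrM; [exact/commr_sym/parV_comm | apply/commrV/commr_sym/T_comm; lia].
- rewrite hpU3_phi -tailconj1E; apply: (commr_tailconj_shift hT); try lia.
  by apply: commr_T_Tnv; lia.
- rewrite hpU4_phi -tailconj1E; apply: (commr_tailconj_shift hT); try lia.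
  by apply: commr_T_Tn; lia.
Qed.

Lemma braid4_U_T1 j : (1 <= j <= 4)%N -> GRing.comm (U j) (Tphi 1 * U j * Tphi 1).
Proof.
move=> hj; apply/braid4_commr; rewrite hpT_phi; last by lia.
have u0 := T_unit (leq0n n); have u1 : T 1 \is a GRing.unit by apply: T_unit; lia.
have hT := braidA_T.
case: j hj => [|[|[|[|[|j]]]]] //= _.
- by rewrite hpU1_phi; apply: braid4_mull; [exact: par_comm | exact: braid4_T0T1].
- rewrite hpU2_phi -mulrA; apply: braid4_mull; first exact: parV_comm.
  apply: braid4_T0dual => //; last exact: braid4_T0T1.
  + by rewrite -X_succ; [apply: commr_TX; [| | left] |]; lia.
  + by rewrite -X_succ; [apply: commr_X |]; lia.
- rewrite hpU3_phi -tailconj1E; apply: (braid4_tailconj hT) => //.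
  + by rewrite -subn1; exact: braid4_Tnv.
  + by move=> j hj; apply: commr_T_Tnv; lia.
- rewrite hpU4_phi -tailconj1E; apply: (braid4_tailconj hT) => //.
  + by rewrite -subn1; apply/braid4_sym/braid4_Tn.
  + by move=> j hj; apply: commr_T_Tn; lia.
Qed.

Lemma commr_U1 Z : GRing.comm (T 0) Z -> GRing.comm (U 1) Z.
Proof. by move=> h; rewrite hpU1_phi; apply: commrMl => //; apply: par_comm. Qed.

Lemma commr_U2 Z : GRing.comm (T 0) Z -> GRing.comm (X 1) Z -> GRing.comm (U 2) Z.
Proof.
move=> h0 h1; rewrite hpU2_phi; apply: commrMl => //; apply: commrMl.
  exact: parV_comm.
exact/commr_sym/commrV/commr_sym.
Qed.

Lemma commr_U1_conjU2 : GRing.comm (U 1) ((T 1)^-1 * U 2 * T 1).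
Proof.
have u0 := T_unit (leq0n n); have u1 : T 1 \is a GRing.unit by apply: T_unit; lia.
rewrite hpU1_phi hpU2_phi.
have -> : (T 1)^-1 * (q^-1 * (T 0)^-1 * X 1) * T 1 = q^-1 * ((T 1)^-1 * ((T 0)^-1 * X 1) * T 1).
  by rewrite -!mulrA -(word2_rw (parV_comm Pq (T 1)^-1)).
apply/commr_sym/commrM; apply/commr_sym; first exact: par_comm.
apply: commrM; first exact/commr_sym/parV_comm.
apply: commr_T0dual => //; last exact: braid4_T0T1.
by rewrite -X_succ; [apply: commr_TX; [| | left] |]; lia.
Qed.

Lemma commr_U_conjU k j : (1 <= k)%N -> (k < j)%N -> (j <= 4)%N ->
  GRing.comm (U k) ((Tphi 1)^-1 * U j * Tphi 1).
Proof.
move=> hk hkj hj; rewrite hpT_phi; last by lia.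
have hT := braidA_T.
have hT0 Z : GRing.comm (T 0) Z -> GRing.comm (T 0) (tailconj n T 2 Z).
  by move=> h; apply: commr_tailconj2 => // i hi; apply: T_comm; lia.
have hX1 Z : GRing.comm (X 1) Z -> GRing.comm (X 1) (tailconj n T 2 Z).
  by move=> h; apply: commr_tailconj2 => // i hi; apply/commr_sym/commr_T_X1; lia.
have T0Tn : GRing.comm (T 0) (T n) by apply: commr_T_Tn; lia.
have T0Tnv : GRing.comm (T 0) Tnv by apply: commr_T_Tnv; lia.
case: k hk hkj => [|[|[|[|k]]]] //= _; case: j hj => [|[|[|[|[|j]]]]] //= _ _.
- exact: commr_U1_conjU2.
- by rewrite hpU3_phi -tailconj1E conjV_tailconj1; apply/commr_U1/hT0.
- by rewrite hpU4_phi -tailconj1E conjV_tailconj1; apply/commr_U1/hT0.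
- rewrite hpU3_phi -tailconj1E conjV_tailconj1.
  by apply: commr_U2; [apply: hT0 | apply/hX1/commr_X1_Tnv].
- rewrite hpU4_phi -tailconj1E conjV_tailconj1.
  by apply: commr_U2; [apply: hT0 | apply/hX1/commr_X1_Tn].
- rewrite hpU3_phi hpU4_phi -!tailconj1E; apply: (commr_tailconj_conj hT) => //.
  + by move=> i hi; apply: commr_T_Tnv; lia.
  + by move=> i hi; apply: commr_T_Tn; lia.
  + by rewrite -subn1; exact: commr_Tnv_conj.
Qed.

Lemma U_quadratic k : (1 <= k <= 4)%N ->
  let u1 := match k with 1 => q * P Pt0 | 2 => P Pu0 | 3 => P Pun | _ => P Ptn end in
  let u2 := match k with
            | 1 => - (q * (P Pt0)^-1) | 2 => - (P Pu0)^-1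
            | 3 => - (P Pun)^-1 | _ => - (P Ptn)^-1 end in
  (U k - u1) * (U k - u2) = 0.
Proof.
case: k => [|[|[|[|[|k]]]]] //= _; rewrite opprK.
- rewrite hpU1_phi -mulrBr -mulrDr -mulrA -(word2_rw (par_comm Pq _)).
  by rewrite (proj2 (hecke_quadP (T_unit (leq0n n)) (par_unit _) (par_comm _ _)) hecke_T0) !mulr0.
- by apply/hecke_quadP; rewrite ?par_unit ?U2_unit ?hpU2_phi //; [exact: par_comm | exact: hecke_T0v].
- apply/hecke_quadP; rewrite ?par_unit ?U3_unit //; first exact: par_comm.
  by rewrite hpU3_phi; apply: hecke_conj; [exact: S_unit | exact: Tnv_unit | exact: par_comm | exact: hecke_Tnv].
- apply/hecke_quadP; rewrite ?par_unit ?U4_unit //; first exact: par_comm.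
  by rewrite hpU4_phi; apply: hecke_conj; [exact: S_unit | exact: T_unit | exact: par_comm | exact: hecke_Tn].
Qed.

Lemma phi_rel : HpRel (phi v).
Proof.
split.
- exact: par_central.
- by case=> [|[|[|[|[|k]]]]] //= _; [exact: U1_unit | exact: U2_unit | exact: U3_unit | exact: U4_unit].
- by move=> i hi; rewrite hpT_phi; [apply: T_unit | ]; lia.
- exact: prod_relation_phi.
split; first split.
- by move=> i h1 h2; rewrite !hpT_phi; [apply: T_braid | ..]; lia.
- by move=> i j h1 h2 h3; rewrite !hpT_phi; [apply: T_comm | ..]; lia.
- exact: commr_U_T.
- exact: braid4_U_T1.
- exact: commr_U_conjU.
split; first exact: U_quadratic.
by move=> i hi; rewrite hpT_phi; [exact: hecke_T | lia].
Qed.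

Lemma psi_phi h : eval (phi v) (psi hn h) = v h.
Proof.
case: h => [p | [m hm] | [m hm]] //.
- change (eval (phi v) (psiT hn m) = v (ShT (Ordinal hm))).
  have -> : v (ShT (Ordinal hm)) = T m.
    by rewrite shT_gen //; congr (v (ShT _)); apply: val_inj; rewrite /= inordK.
  rewrite /psiT; case: (posnP m) => [->|h0].
    change (q^-1 * hpU (phi v) 1 = T 0).
    by rewrite hpU1_phi mulKr ?par_unit.
  case: (ltnP m n) => hmn; first by rewrite eval_termT ?hpT_phi //; lia.
  have -> : m = n by lia.
  change (eval (phi v) (termSV hn) * hpU (phi v) 4 * eval (phi v) (termS hn) = T n).
  rewrite eval_termSV ?eval_termS ?hpU4_phi ?ascprod_phi; try lia.
    by rewrite -!mulrA mulKr ?S_unit // mulVr ?S_unit // mulr1.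
  by move=> i hi; rewrite hpT_phi ?T_unit //; lia.
- change (eval (phi v) (psiX hn m) = v (ShX (Ordinal hm))).
  rewrite /psiX /= eval_term_descprod // eval_term_ascprod // descprod_phi // ascprod_phi //.
  by rewrite -/(hpU (phi v) 1) -/(hpU (phi v) 2) U1U2 -X_descprod // (shX_gen _ (j := Ordinal hm)).
Qed.

End PhiRel.
End PhiRel.

Module PsiRel.
Section PsiRel.
Variables (n : nat) (hn : (1 < n)%N) (A : unitAlgType C_fieldType) (w : HpGen n -> A).
Hypothesis Hw : HpRel w.
Local Notation T := (hpT w).
Local Notation U := (hpU w).
Local Notation P := (hpP w).
Local Notation q := (P Pq).

Ltac relations := move: Hw; rewrite /HpRel; case=> h0 h1 h2 h3 [[h4 h5 h6 h7 h8] [h9 h10]].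

Lemma par_central p : centralUnit (P p). Proof. by relations; apply: h0. Qed.
Lemma par_unit p : P p \is a GRing.unit. Proof. exact: (proj1 (par_central p)). Qed.
Lemma par_comm p y : GRing.comm (P p) y. Proof. exact: (proj2 (par_central p) y). Qed.
Lemma parV_comm p y : GRing.comm (P p)^-1 y.
Proof. exact/commr_sym/commrV/commr_sym/par_comm. Qed.
Lemma U_unit k : (1 <= k <= 4)%N -> U k \is a GRing.unit. Proof. by relations; apply: h1. Qed.
Lemma T_unit i : (1 <= i <= n.-1)%N -> T i \is a GRing.unit. Proof. by relations; apply: h2. Qed.
Lemma prod_relation : (U 1 * U 2 * U 3 * U 4) *
   ((\prod_(i <- iota 1 (n - 2)) T i) * T (n - 1)%N * T (n - 1)%N *
    (\prod_(i <- rev (iota 1 (n - 2))) T i)) = 1.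
Proof. by relations. Qed.
Lemma T_braid i : (1 <= i)%N -> (i + 1 <= n - 1)%N ->
  T i * T i.+1 * T i = T i.+1 * T i * T i.+1.
Proof. by relations; apply: h4. Qed.
Lemma T_comm i j : (1 <= i <= n - 1)%N -> (1 <= j <= n - 1)%N -> (i.+1 < j)%N ->
  GRing.comm (T i) (T j).
Proof. by relations; apply: h5. Qed.
Lemma commr_U_T i j : (2 <= i <= n - 1)%N -> (1 <= j <= 4)%N -> GRing.comm (U j) (T i).
Proof. by relations; apply: h6. Qed.
Lemma braid4_U_T1 j : (1 <= j <= 4)%N -> braid4 (U j) (T 1).
Proof. by move=> hj; apply/braid4_commr; relations; apply: h7. Qed.
Lemma commr_U_conjU k j : (1 <= k)%N -> (k < j)%N -> (j <= 4)%N ->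
  GRing.comm (U k) ((T 1)^-1 * U j * T 1).
Proof. by relations; apply: h8. Qed.
Lemma U1_quadratic : (U 1 - q * P Pt0) * (U 1 + q * (P Pt0)^-1) = 0.
Proof. by relations; have := h9 1 isT; rewrite /= opprK. Qed.
Lemma U2_quadratic : (U 2 - P Pu0) * (U 2 + (P Pu0)^-1) = 0.
Proof. by relations; have := h9 2 isT; rewrite /= opprK. Qed.
Lemma U3_quadratic : (U 3 - P Pun) * (U 3 + (P Pun)^-1) = 0.
Proof. by relations; have := h9 3 isT; rewrite /= opprK. Qed.
Lemma U4_quadratic : (U 4 - P Ptn) * (U 4 + (P Ptn)^-1) = 0.
Proof. by relations; have := h9 4 isT; rewrite /= opprK. Qed.
Lemma hecke_T i : (1 <= i <= n - 1)%N -> T i - (T i)^-1 = P Pt - (P Pt)^-1.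
Proof. by relations; apply: h10. Qed.

Lemma braidA_T : braidA n T.
Proof.
split=> [i hi | i hi1 hi2 | i j hi hij hj]; first by apply: T_unit; lia.
- by apply: T_braid; lia.
- by apply: T_comm; lia.
Qed.

Local Notation S := (ascprod T 1 (n - 1)).
Local Notation S' := (descprod T 1 (n - 1)).
Local Notation X1 := (U 1 * U 2).

Lemma T1_unit : T 1 \is a GRing.unit. Proof. by apply: T_unit; lia. Qed.
Lemma S_unit : S \is a GRing.unit. Proof. by apply: (ascprod_unit braidA_T); lia. Qed.
Lemma S'_unit : S' \is a GRing.unit. Proof. by apply: (descprod_unit braidA_T); lia. Qed.
Lemma X1_unit : X1 \is a GRing.unit. Proof. by rewrite rpredM ?U_unit. Qed.

Definition sahiT0 := q^-1 * U 1.
Definition sahiTn := S^-1 * U 4 * S.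
Definition sahiX j := descprod T 1 j.-1 * X1 * ascprod T 1 j.-1.

Lemma sahiT0_unit : sahiT0 \is a GRing.unit.
Proof. by rewrite rpredM ?unitrV ?par_unit ?U_unit. Qed.
Lemma sahiTn_unit : sahiTn \is a GRing.unit.
Proof. by rewrite !rpredM ?unitrV ?S_unit ?U_unit. Qed.
Lemma sahiX_unit j : (0 < j <= n)%N -> sahiX j \is a GRing.unit.
Proof.
move=> hj; have uD : descprod T 1 j.-1 \is a GRing.unit.
  by apply: (descprod_unit braidA_T); lia.
have uA : ascprod T 1 j.-1 \is a GRing.unit by apply: (ascprod_unit braidA_T); lia.
by rewrite /sahiX rpredM // rpredM // X1_unit.
Qed.

Lemma sahiX1 : sahiX 1 = X1. Proof. by rewrite /sahiX descprod0 ascprod0 mul1r mulr1. Qed.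
Lemma sahiX2 : sahiX 2 = T 1 * X1 * T 1.
Proof. by rewrite /sahiX /= ascprodS descprodS ascprod0 descprod0 mulr1 mul1r. Qed.
Lemma sahiX_succ i : (0 < i < n)%N -> sahiX i.+1 = T i * sahiX i * T i.
Proof.
move=> hi; rewrite /sahiX /=; have e : i = (i.-1).+1 by lia.
have -> : descprod T 1 i = T i * descprod T 1 i.-1 by rewrite {1}e descprodSr add1n -e.
have -> : ascprod T 1 i = ascprod T 1 i.-1 * T i by rewrite {1}e ascprodSr add1n -e.
by rewrite !mulrA.
Qed.
Lemma sahiX_n : sahiX n = S' * X1 * S. Proof. by rewrite /sahiX subn1. Qed.

Lemma sahiT0_inv : q^-1 * sahiT0^-1 * X1 = U 2.
Proof.
have uq := par_unit Pq; have u1 : U 1 \is a GRing.unit by rewrite U_unit.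
by rewrite /sahiT0 invrM ?unitrV // invrK -!mulrA -(word2_rw (par_comm Pq _)) !mulKr.
Qed.

Lemma sahiTnv_U3 : (sahiX n)^-1 * sahiTn^-1 = S^-1 * U 3 * S.
Proof.
have uS := S_unit; have uS' := S'_unit; have uX := X1_unit.
have u3 : U 3 \is a GRing.unit by rewrite U_unit.
have u4 : U 4 \is a GRing.unit by rewrite U_unit.
have hp := prod_relation; rewrite -ascprod_mul_descprodE // in hp.
have -> : U 3 = X1^-1 * (X1 * U 3 * U 4 * (S * S')) * S'^-1 * S^-1 * (U 4)^-1.
  by move: X1 uX => Y uY; rewrite -!mulrA mulKr // !mulVKr // mulrV // mulr1.
rewrite hp mulr1 sahiX_n /sahiTn invrM3 // invrM3 ?unitrV // invrK.
by rewrite -!mulrA.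
Qed.

Lemma sahiTn_headconjV : sahiTn = headconjV T n.-1 (U 4).
Proof. by rewrite /sahiTn /headconjV subn1. Qed.

Lemma commr_sahiTn x : (forall j, (1 < j < n)%N -> GRing.comm x (T j)) ->
  GRing.comm x ((T 1)^-1 * U 4 * T 1) -> GRing.comm x sahiTn.
Proof.
move=> hxT hx4; have e : (n - 1 = (n - 2).+1)%N by lia.
have uP : ascprod T 2 (n - 2) \is a GRing.unit by apply: (ascprod_unit braidA_T); lia.
have hxP : GRing.comm x (ascprod T 2 (n - 2)).
  by apply: commr_ascprod => j hj; apply: hxT; lia.
have -> : sahiTn = (ascprod T 2 (n - 2))^-1 * ((T 1)^-1 * U 4 * T 1) * ascprod T 2 (n - 2).
  by rewrite /sahiTn e ascprodS invrM ?T1_unit // !mulrA.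
by apply: commrM; [apply: commrM => //; apply: commrV | ].
Qed.

Lemma commr_X1_T j : (1 < j < n)%N -> GRing.comm X1 (T j).
Proof. by move=> hj; apply: commrMl; apply: commr_U_T; lia. Qed.

Lemma commr_U1_sahiX2 : GRing.comm (U 1) (sahiX 2).
Proof.
have u1 := T1_unit.
have -> : sahiX 2 = (T 1 * U 1 * T 1) * ((T 1)^-1 * U 2 * T 1).
  by rewrite sahiX2 -!mulrA mulVKr.
by apply: commrM; [apply/braid4_commr/braid4_U_T1 | apply: commr_U_conjU].
Qed.

Lemma commr_X1_sahiX2 : GRing.comm X1 (sahiX 2).
Proof.
have u1 := T1_unit; apply: commrMl; first exact: commr_U1_sahiX2.
have -> : sahiX 2 = (T 1 * U 1 * (T 1)^-1) * (T 1 * U 2 * T 1).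
  by rewrite sahiX2 -!mulrA mulKr.
apply: commrM; last exact/braid4_commr/braid4_U_T1.
by apply: commr_conj_swap => //; apply: commr_U_conjU.
Qed.

Lemma commr_sahiX_gt1 Y : (forall j, (1 < j < n)%N -> GRing.comm Y (T j)) ->
  GRing.comm Y (sahiX 2) -> forall j, (1 < j <= n)%N -> GRing.comm Y (sahiX j).
Proof.
move=> hYT hY2; elim=> [|j IH] hj; first by lia.
case: (ltnP 1 j) => h; last by have -> : j = 1 by lia.
rewrite sahiX_succ; last by lia.
by apply: commrM; first apply: commrM; [apply: hYT | apply: IH | apply: hYT]; lia.
Qed.

Lemma commr_T_sahiX_lt i j : (1 <= j)%N -> (j < i)%N -> (i < n)%N ->
  GRing.comm (T i) (sahiX j).
Proof.
have hT := braidA_T.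
move=> hj hji hi; rewrite /sahiX; apply: commrM; first apply: commrM.
- by apply: commr_descprod => k hk; apply/commr_sym/T_comm; lia.
- by apply/commr_sym/commr_X1_T; lia.
- by apply: commr_ascprod => k hk; apply/commr_sym/T_comm; lia.
Qed.

Lemma commr_T_sahiX_gt i j : (0 < i)%N -> (i.+1 < j)%N -> (j <= n)%N ->
  GRing.comm (T i) (sahiX j).
Proof.
elim: j i => [|j IH] i hi hij hjn; first by lia.
rewrite sahiX_succ; last by lia.
case: (ltnP i.+1 j) => h.
  by apply: commrM; first apply: commrM; [apply: T_comm | apply: IH | apply: T_comm]; lia.
have ej : j = i.+1 by lia.
rewrite ej sahiX_succ; last by lia.
by apply: commr_braid_up; [apply: T_braid | apply: commr_T_sahiX_lt]; lia.
Qed.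

Lemma commr_sahiX i j : (1 <= i <= n)%N -> (1 <= j <= n)%N ->
  GRing.comm (sahiX i) (sahiX j).
Proof.
have key i' j' : (0 < i')%N -> (i' < j')%N -> (j' <= n)%N -> GRing.comm (sahiX i') (sahiX j').
  elim: i' j' => [|i' IH] j' hi hij hjn; first by lia.
  case: (posnP i') => h0.
    rewrite h0 sahiX1; apply: commr_sahiX_gt1; last by lia.
    - exact: commr_X1_T.
    - exact: commr_X1_sahiX2.
  rewrite sahiX_succ; last by lia.
  apply/commr_sym; apply: commrM; first apply: commrM.
  - by apply/commr_sym/commr_T_sahiX_gt; lia.
  - by apply/commr_sym/IH; lia.
  - by apply/commr_sym/commr_T_sahiX_gt; lia.
move=> hi hj; case: (ltngtP i j) => h; last by rewrite h.
- by apply: key; lia.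
- by apply/commr_sym/key; lia.
Qed.

Lemma commr_sahiT0_T j : (1 < j < n)%N -> GRing.comm sahiT0 (T j).
Proof. by move=> hj; apply: commrMl; [exact: parV_comm | apply: commr_U_T; lia]. Qed.

Lemma commr_sahiT0_sahiX j : (1 < j <= n)%N -> GRing.comm sahiT0 (sahiX j).
Proof.
move=> hj; apply: commrMl; first exact: parV_comm.
apply: commr_sahiX_gt1 => //; last exact: commr_U1_sahiX2.
by move=> i hi; apply: commr_U_T; lia.
Qed.

Lemma commr_sahiT0_sahiTn : GRing.comm sahiT0 sahiTn.
Proof.
apply: commr_sahiTn; first exact: commr_sahiT0_T.
by apply: commrMl; [exact: parV_comm | apply: commr_U_conjU].
Qed.

Lemma commr_T_sahiTn i : (0 < i < n.-1)%N -> GRing.comm (T i) sahiTn.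
Proof.
move=> hi; rewrite sahiTn_headconjV; apply: (commr_headconjV braidA_T); try lia.
by move=> j hj; apply/commr_sym/commr_U_T; lia.
Qed.

Lemma braid4_T_sahiTn : braid4 (T (n - 1)) sahiTn.
Proof.
rewrite sahiTn_headconjV subn1; apply/braid4_sym/(braid4_headconjV braidA_T) => //.
- exact: braid4_U_T1.
- by move=> j hj; apply/commr_sym/commr_U_T; lia.
Qed.

Lemma commr_sahiX_sahiTn j : (0 < j < n)%N -> GRing.comm (sahiX j) sahiTn.
Proof.
move=> hj; have hX1 : GRing.comm X1 sahiTn.
  by apply: commr_sahiTn; [exact: commr_X1_T | apply: commrMl; apply: commr_U_conjU].
apply: commrMl; first apply: commrMl.
- by apply/commr_sym/commr_descprod => k hk; apply/commr_sym/commr_T_sahiTn; lia.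
- exact: hX1.
- by apply/commr_sym/commr_ascprod => k hk; apply/commr_sym/commr_T_sahiTn; lia.
Qed.

Local Notation f := (fun h => eval w (psi hn h)).

Lemma shT0_psi : shT f 0 = sahiT0.
Proof. by rewrite shT_gen //= inordK. Qed.

Lemma shT_psi i : (0 < i < n)%N -> shT f i = T i.
Proof.
move=> hi; rewrite shT_gen /= ?inordK /psiT; try lia.
have -> : (i == 0%N) = false by apply/negbTE; lia.
by rewrite (_ : (i < n)%N) ?eval_termT //; lia.
Qed.

Lemma shTn_psi : shT f n = sahiTn.
Proof.
rewrite shT_gen // /= inordK // /psiT (_ : (n == 0%N) = false) ?ltnn /=; last by apply/negbTE; lia.
by rewrite eval_termSV ?eval_termS // => i hi; apply: T_unit; lia.
Qed.

Lemma shX_psi j : (0 < j <= n)%N -> shX f j = sahiX j.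
Proof.
move=> hj; rewrite (shX_gen _ (j := ordX hn j.-1)) ?val_ordX //=; try lia.
by rewrite val_ordX ?eval_term_descprod ?eval_term_ascprod //; lia.
Qed.

Lemma shT_psi_unit i : (i <= n)%N -> shT f i \is a GRing.unit.
Proof.
move=> hi; case: (posnP i) => [->|h0]; first by rewrite shT0_psi sahiT0_unit.
case: (ltnP i n) => h1; first by rewrite shT_psi ?T_unit //; lia.
have -> : i = n by lia.
by rewrite shTn_psi sahiTn_unit.
Qed.

Lemma commr_shT_psi i j : (i <= n)%N -> (j <= n)%N -> (i.+1 < j)%N ->
  GRing.comm (shT f i) (shT f j).
Proof.
move=> hi hj hij; case: (ltnP j n) => hjn.
  rewrite (shT_psi (i := j)); last by lia.
  case: (posnP i) => [->|h0]; first by rewrite shT0_psi; apply: commr_sahiT0_T; lia.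
  by rewrite shT_psi; [apply: T_comm | ..]; lia.
have -> : j = n by lia.
rewrite shTn_psi; case: (posnP i) => [->|h0]; first by rewrite shT0_psi; exact: commr_sahiT0_sahiTn.
by rewrite shT_psi; [apply: commr_T_sahiTn | ]; lia.
Qed.

Lemma commr_shT_shX_psi i j : (i <= n)%N -> (1 <= j <= n)%N ->
  ((i.+1 < j)%N \/ (j.+1 < i)%N \/ (i = n /\ j = (n - 1)%N)) ->
  shT f i * shX f j = shX f j * shT f i.
Proof.
move=> hi hj hd; rewrite shX_psi; last by lia.
case: (posnP i) => [e0|h0].
  by subst i; rewrite shT0_psi; apply: commr_sahiT0_sahiX; case: hd => [|[|[]]]; lia.
case: (ltnP i n) => hin.
  rewrite shT_psi; last by lia.
  case: (ltnP j i) => h; first by apply: commr_T_sahiX_lt; lia.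
  by apply: commr_T_sahiX_gt; case: hd => [|[|[]]]; lia.
have ei : i = n by lia.
by subst i; rewrite shTn_psi; apply/commr_sym/commr_sahiX_sahiTn; case: hd => [|[|[]]]; lia.
Qed.

Lemma hecke_sahiT0 : sahiT0 - sahiT0^-1 = P Pt0 - (P Pt0)^-1.
Proof.
have uq := par_unit Pq; have h := U1_quadratic.
rewrite -[U 1](mulVKr uq) -/sahiT0 -mulrBr -mulrDr -mulrA -(word2_rw (par_comm Pq _)) in h.
apply/hecke_quadP; rewrite ?sahiT0_unit ?par_unit //; first exact: par_comm.
by apply: (mulrI uq); apply: (mulrI uq); rewrite h !mulr0.
Qed.

Lemma hecke_sahiTn : sahiTn - sahiTn^-1 = P Ptn - (P Ptn)^-1.
Proof.
rewrite /sahiTn; apply: hecke_conjV; rewrite ?S_unit ?U_unit //; first exact: par_comm.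
by apply/hecke_quadP; rewrite ?U_unit ?par_unit //; [exact: par_comm | exact: U4_quadratic].
Qed.

Lemma hecke_sahiTnv : (sahiX n)^-1 * sahiTn^-1 - ((sahiX n)^-1 * sahiTn^-1)^-1 =
  P Pun - (P Pun)^-1.
Proof.
rewrite sahiTnv_U3; apply: hecke_conjV; rewrite ?S_unit ?U_unit //; first exact: par_comm.
by apply/hecke_quadP; rewrite ?U_unit ?par_unit //; [exact: par_comm | exact: U3_quadratic].
Qed.

Lemma psi_rel : ShRel f.
Proof.
split.
- exact: par_central.
- exact: shT_psi_unit.
- by move=> i hi; rewrite shX_psi ?sahiX_unit //; lia.
- rewrite shT0_psi shT_psi; last by lia.
  by apply: braid4_mull; [exact: parV_comm | exact: braid4_U_T1].
split.
- by move=> i j hi hj; rewrite !shX_psi; [apply: commr_sahiX | ..]; lia.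
- by rewrite shTn_psi shT_psi; [exact: braid4_T_sahiTn | lia].
- by move=> i h1 h2; rewrite !shT_psi; [apply: T_braid | ..]; lia.
- exact: commr_shT_psi.
split.
- by move=> i hi; rewrite shT_psi; [exact: hecke_T | lia].
- by rewrite shT0_psi; exact: hecke_sahiT0.
- by rewrite shTn_psi; exact: hecke_sahiTn.
split.
- exact: commr_shT_shX_psi.
- move=> i hi; rewrite !shX_psi ?shT_psi; try lia.
  by rewrite sahiX_succ ?mulrK ?T_unit //; lia.
- by rewrite shX_psi ?shTn_psi; [exact: hecke_sahiTnv | lia].
- rewrite shX_psi ?shT0_psi ?sahiX1 /shP ?sahiT0_inv; last by lia.
  by apply/hecke_quadP; rewrite ?U_unit ?par_unit //; [exact: par_comm | exact: U2_quadratic].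
Qed.

Lemma phi_psi g : phi f g = w g.
Proof.
have ascprod_psi : ascprod (shT f) 1 (n - 1) = S.
  by apply: eq_big_seq => i; rewrite mem_iota => hi; apply: shT_psi; lia.
have uS := S_unit; have uq := par_unit Pq.
case: g => [p | [m hm] | [m hm]] //.
- have -> : Ordinal hm = inord m by apply: val_inj; rewrite /= inordK.
  case: m hm => [|[|[|[|m]]]] hm //.
  + change (hpU (phi f) 1 = U 1); by rewrite hpU1_phi shT0_psi /sahiT0 mulVKr.
  + change (hpU (phi f) 2 = U 2); rewrite hpU2_phi shT0_psi shX_psi; last by lia.
    by rewrite sahiX1 sahiT0_inv.
  + change (hpU (phi f) 3 = U 3); rewrite hpU3_phi ascprod_psi shX_psi ?shTn_psi; last by lia.
    by rewrite sahiTnv_U3 -!mulrA mulVKr // mulrV // mulr1.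
  + change (hpU (phi f) 4 = U 4); rewrite hpU4_phi ascprod_psi shTn_psi /sahiTn.
    by rewrite -!mulrA mulVKr // mulrV // mulr1.
- change (shT f m.+1 = w (HpT (Ordinal hm))).
  by rewrite shT_psi; [apply: hpT_gen | lia].
Qed.

End PsiRel.
End PsiRel.

Theorem proposition3p5 (n : nat) (hn : (2 <= n)%N) :
  (forall (A : unitAlgType C_fieldType) (v : ShGen n -> A),
      ShRel v -> HpRel (phi v)) /\
  exists psi : ShGen n -> term (HpGen n),
    [/\ forall (A : unitAlgType C_fieldType) (w : HpGen n -> A),
          HpRel w -> ShRel (fun h => eval w (psi h)),
        forall (A : unitAlgType C_fieldType) (w : HpGen n -> A),
          HpRel w -> forall g, phi (fun h => eval w (psi h)) g = w g &
        forall (A : unitAlgType C_fieldType) (v : ShGen n -> A),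
          ShRel v -> forall h, eval (phi v) (psi h) = v h].
Proof.
split=> [A v Hv|]; first exact: PhiRel.phi_rel.
exists (psi hn); split=> [A w Hw | A w Hw g | A v Hv h].
- exact: PsiRel.psi_rel.
- exact: PsiRel.phi_psi.
- exact: PhiRel.psi_phi.
Qed.
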